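(* Let $y:[0,h]\to\mathbb{R}$ solve $y'=f(y)$, $y(0)=y_0$, with $f$ Lipschitz continuous with constant $L$, and assume $f\circ y\in C^M([0,h])$. Given any previous iterate $\eta^{[p]}$, define the explicit SDC iterate by $\eta_0^{[p+1]}=\eta_0$ and, for $n=1,\dots,N$, $$\eta_n^{[p+1]}=\eta_{n-1}^{[p+1]}+h_n\big[f(\eta_{n-1}^{[p+1]})-f(\eta_{n-1}^{[p]})\big]+h\sum_{m=1}^M w_{n,m}f(\eta_m^{[p]}).$$ Then for each $n=1,\dots,N$, $$|e_n^{[p+1]}|\le e^{NhL}|e_0|+C_1h\|\mathbf e^{[p]}\|+C_2h^{M+1},$$ where $C_1,C_2$ are constants depending only on $f$, the exact solution $y$, and the selection of quadrature points.
   Context: Quadrature nodes $0\le\xi_1<\dots<\xi_M\le1$ partition $[0,1]$ into $N$ subintervals, where $N=M-1$ if both endpoints $0,1$ are nodes, $N=M$ if exactly one is, and $N=M+1$ if neither is. The right endpoints are $\xi^R_0=0$, $\xi^R_N=1$, and for the interior ones $\xi^R_n=\xi_{n+1}$ if the left endpoint $0$ is a node, $\xi^R_n=\xi_n$ otherwise. $\ell_m$ is the Lagrange basis polynomial of degree $\le M-1$ with $\ell_m(\xi_k)=\delta_{mk}$, and $w_{n,m}=\int_{\xi^R_{n-1}}^{\xi^R_n}\ell_m(x)\,dx$. For step size $h>0$, $t_n=\xi^R_nh$, $h_n=(\xi^R_n-\xi^R_{n-1})h$. The iterate $\eta^{[p]}$ consists of approximations $\eta^{[p]}_n\approx y(t_n)$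 and values $\eta^{[p]}_m\approx y(\xi_mh)$ at the quadrature nodes used in the quadrature sum. $\eta_0$ approximates $y_0$, $e_0=\eta_0-y_0$, $e^{[p+1]}_n=\eta^{[p+1]}_n-y(t_n)$, $\mathbf e^{[p]}=(\eta^{[p]}_m-y(\xi_mh))_{m=1}^M$, $\|\mathbf e\|=\max_m|e_m|$. *)

From Stdlib Require Import Reals Lra.
From Coquelicot Require Import Coquelicot.
Open Scope R_scope.

Fixpoint sumR (n : nat) (a : nat -> R) : R :=
  match n with O => 0 | S k => sumR k a + a k end.
Fixpoint prodR (n : nat) (a : nat -> R) : R :=
  match n with O => 1 | S k => prodR k a * a k end.
(* maxR n a = max(0, a 0, ..., a (n-1)) ; used only for nonnegative a *)
Fixpoint maxR (n : nat) (a : nat -> R) : R :=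
  match n with O => 0 | S k => Rmax (maxR k a) (a k) end.

(* Quadrature nodes are xi 1, ..., xi M (1-based, as in the paper). *)

Definition lagrange (M : nat) (xi : nat -> R) (m : nat) (x : R) : R :=
  prodR M (fun i => if Nat.eq_dec (S i) m then 1
                    else (x - xi (S i)) / (xi m - xi (S i))).

Definition num_sub (M : nat) (xi : nat -> R) : nat :=
  if Req_EM_T (xi 1%nat) 0 then
    (if Req_EM_T (xi M) 1 then (M - 1)%nat else M)
  else (if Req_EM_T (xi M) 1 then M else S M).

Definition xiR (M : nat) (xi : nat -> R) (n : nat) : R :=
  match n with
  | O => 0
  | _ => if Nat.eq_dec n (num_sub M xi) then 1
         else if Req_EM_T (xi 1%nat) 0 then xi (S n) else xi n
  end.

(* index m of the quadrature node coinciding with an interior xi^R_n *)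
Definition node_of (M : nat) (xi : nat -> R) (n : nat) : nat :=
  if Req_EM_T (xi 1%nat) 0 then S n else n.

Definition weight (M : nat) (xi : nat -> R) (n m : nat) : R :=
  RInt (lagrange M xi m) (xiR M xi (n - 1)) (xiR M xi n).

(* explicit SDC sweep: new iterate eta^{[p+1]}_n at t_n, given the previous
   iterate's values gp n ~ y(t_n) and vp m ~ y(xi_m h) at the nodes *)
Fixpoint sdc_next (f : R -> R) (h : R) (M : nat) (xi : nat -> R) (eta0 : R)
  (gp vp : nat -> R) (n : nat) : R :=
  match n with
  | O => eta0
  | S k =>
      let prev := sdc_next f h M xi eta0 gp vp k in
      prev + (xiR M xi (S k) - xiR M xi k) * h * (f prev - f (gp k))
           + h * sumR M (fun i => weight M xi (S k) (S i) * f (vp (S i)))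
  end.

Definition node_err (M : nat) (xi : nat -> R) (h : R) (vp : nat -> R) (y : R -> R) : R :=
  maxR M (fun i => Rabs (vp (S i) - y (xi (S i) * h))).

Definition CM_on (M : nat) (g : R -> R) (a b : R) : Prop :=
  exists D : nat -> R -> R,
    (forall t, a <= t <= b -> D O t = g t) /\
    (forall k t, (k < M)%nat -> a < t < b -> is_derive (D k) t (D (S k) t)) /\
    (forall k t, (k <= M)%nat -> a <= t <= b ->
       filterlim (D k) (within (fun x => a <= x <= b) (locally t)) (locally (D k t))).

From Stdlib Require Import Reals Lra Lia Factorial.
From Coquelicot Require Import Coquelicot.
Open Scope R_scope.

(* The error e_n = eta^{[p+1]}_n - y(t_n) of the sweep satisfies
     e_n = e_{n-1} + h_n [f(eta^{[p+1]}_{n-1}) - f(eta^{[p]}_{n-1})]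
           + h sum_m w_{n,m} [f(eta^{[p]}_m) - f(y(xi_m h))] - rho_n,
   where rho_n = y(t_n) - y(t_{n-1}) - h sum_m w_{n,m} f(y(xi_m h)) is the defect
   of the interpolatory quadrature rule.  The rule is exact on polynomials of
   degree < M, so replacing f o y by its Taylor polynomial of degree M - 1, whose
   error is at most K t^M, gives |rho_n| <= K (1 + W) h^(M+1), W bounding the
   sums of absolute weights.  The Lipschitz bound controls the two other terms
   by h L (|e_{n-1}| + ||e^{[p]}||) and h W L ||e^{[p]}||, and a discrete
   Gronwall inequality over the N steps yields the estimate. *)

Lemma sumR_ext n a b : (forall i, (i < n)%nat -> a i = b i) -> sumR n a = sumR n b.
Proof.
  induction n as [|n IH]; simpl; intros H; auto.
  rewrite IH, H by (try intros; try apply H; lia); reflexivity.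
Qed.

Lemma sumR_minus n a b : sumR n (fun i => a i - b i) = sumR n a - sumR n b.
Proof. induction n as [|n IH]; simpl; [ring | rewrite IH; ring]. Qed.

Lemma sumR_scal n c a : sumR n (fun i => c * a i) = c * sumR n a.
Proof. induction n as [|n IH]; simpl; [ring | rewrite IH; ring]. Qed.

Lemma sumR_abs_le n w d X : (forall i, (i < n)%nat -> Rabs (d i) <= X) ->
  Rabs (sumR n (fun i => w i * d i)) <= sumR n (fun i => Rabs (w i)) * X.
Proof.
  induction n as [|n IH]; simpl; intros H.
  - rewrite Rabs_R0; lra.
  - eapply Rle_trans; [apply Rabs_triang|]. rewrite Rabs_mult.
    assert (IHn := IH ltac:(intros; apply H; lia)).
    assert (Rabs (w n) * Rabs (d n) <= Rabs (w n) * X)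
      by (apply Rmult_le_compat_l; [apply Rabs_pos | apply H; lia]).
    lra.
Qed.

Lemma sumR_delta n a k : (k < n)%nat -> (forall i, (i < n)%nat -> i <> k -> a i = 0) ->
  sumR n a = a k.
Proof.
  induction n as [|n IH]; simpl; intros Hk H; [lia|].
  destruct (Nat.eq_dec k n) as [->|Hkn].
  - rewrite (sumR_ext n a (fun i => 0 * a i)) by (intros; rewrite H by lia; ring).
    rewrite sumR_scal; ring.
  - rewrite IH, (H n) by (try lia; intros; apply H; lia); ring.
Qed.

Lemma prodR_one n a : (forall i, (i < n)%nat -> a i = 1) -> prodR n a = 1.
Proof.
  induction n as [|n IH]; simpl; intros H; auto.
  rewrite IH, H by (try intros; try apply H; lia); ring.
Qed.

Lemma prodR_zero n a k : (k < n)%nat -> a k = 0 -> prodR n a = 0.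
Proof.
  induction n as [|n IH]; simpl; intros Hk H; [lia|].
  destruct (Nat.eq_dec k n) as [->|]; [rewrite H | rewrite IH by (auto; lia)]; ring.
Qed.

Lemma maxR_nonneg n a : 0 <= maxR n a.
Proof.
  induction n as [|n IH]; simpl; [lra | eapply Rle_trans; [apply IH | apply Rmax_l]].
Qed.

Lemma maxR_ge n a k : (k < n)%nat -> a k <= maxR n a.
Proof.
  induction n as [|n IH]; simpl; intros Hk; [lia|].
  destruct (Nat.eq_dec k n) as [->|]; [apply Rmax_r|].
  eapply Rle_trans; [apply IH; lia | apply Rmax_l].
Qed.

(* Degree [< d]. *)
Fixpoint is_poly (d : nat) (p : R -> R) : Prop :=
  match d with
  | O => forall x, p x = 0
  | S d => exists a q, is_poly d q /\ forall x, p x = a + x * q x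
  end.

Lemma is_poly_ext d p q : is_poly d p -> (forall x, p x = q x) -> is_poly d q.
Proof.
  destruct d as [|d]; simpl.
  - intros Hp E x; rewrite <- E; auto.
  - intros [a [r [Hr Er]]] E; exists a, r; split; auto.
    intros x; rewrite <- E; auto.
Qed.

Lemma is_poly_0 d : is_poly d (fun _ => 0).
Proof.
  induction d as [|d IH]; simpl; auto.
  exists 0, (fun _ => 0); split; auto; intros; ring.
Qed.

Lemma is_poly_S d p : is_poly d p -> is_poly (S d) p.
Proof.
  revert p; induction d as [|d IH]; intros p Hp.
  - exists 0, (fun _ => 0); split; [apply is_poly_0|].
    intros x; simpl in Hp; rewrite Hp; ring.
  - destruct Hp as [a [q [Hq E]]]; exists a, q; split; auto.
Qed.

Lemma is_poly_le d d' p : (d <= d')%nat -> is_poly d p -> is_poly d' p.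
Proof. induction 1; auto using is_poly_S. Qed.

Lemma is_poly_plus d p q : is_poly d p -> is_poly d q -> is_poly d (fun x => p x + q x).
Proof.
  revert p q; induction d as [|d IH]; simpl; intros p q Hp Hq.
  - intros x; rewrite Hp, Hq; ring.
  - destruct Hp as [a [r [Hr Er]]], Hq as [b [s [Hs Es]]].
    exists (a + b), (fun x => r x + s x); split; auto.
    intros x; rewrite Er, Es; ring.
Qed.

Lemma is_poly_scal d c p : is_poly d p -> is_poly d (fun x => c * p x).
Proof.
  revert p; induction d as [|d IH]; simpl; intros p Hp.
  - intros x; rewrite Hp; ring.
  - destruct Hp as [a [r [Hr Er]]].
    exists (c * a), (fun x => c * r x); split; auto.
    intros x; rewrite Er; ring.
Qed.

Lemma is_poly_mul_affine d p a b : is_poly d p -> is_poly (S d) (fun x => p x * (a * x + b)).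
Proof.
  intros Hp.
  apply is_poly_ext with (fun x => b * p x + x * (a * p x)); [|intros; ring].
  apply is_poly_plus; [apply is_poly_scal, is_poly_S; auto|].
  exists 0, (fun x => a * p x); split; [apply is_poly_scal; auto | intros; ring].
Qed.

Lemma is_poly_pow j : is_poly (S j) (fun x => x ^ j).
Proof.
  induction j as [|j IH].
  - exists 1, (fun _ => 0); split; [apply is_poly_0 | intros; simpl; ring].
  - exists 0, (fun x => x ^ j); split; [auto | intros; simpl; ring].
Qed.

Lemma is_poly_sum d k F : (forall j, (j < k)%nat -> is_poly d (F j)) ->
  is_poly d (fun x => sumR k (fun j => F j x)).
Proof.
  induction k as [|k IH]; simpl; intros H; [apply is_poly_0|].
  apply is_poly_plus; [apply IH; intros; apply H; lia | apply H; lia].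
Qed.

Lemma is_poly_scale_arg d p h : is_poly d p -> is_poly d (fun x => p (x * h)).
Proof.
  revert p; induction d as [|d IH]; simpl; intros p Hp; auto.
  destruct Hp as [a [q [Hq E]]].
  exists a, (fun x => h * q (x * h)); split; [apply is_poly_scal, IH; auto|].
  intros x; rewrite E; ring.
Qed.

Lemma is_poly_factor d p c : is_poly (S d) p ->
  exists q, is_poly d q /\ forall x, p x = p c + (x - c) * q x.
Proof.
  revert p; induction d as [|d IH]; intros p [a [q [Hq E]]].
  - exists (fun _ => 0); split; [apply is_poly_0|].
    intros x; rewrite !E, !Hq; ring.
  - destruct (IH q Hq) as [r [Hr Er]].
    exists (fun x => q c + x * r x); split.
    + exists (q c), r; split; auto.
    + intros x; rewrite !E, (Er x); ring.
Qed.

Lemma is_poly_roots_eq0 d p (z : nat -> R) : is_poly d p ->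
  (forall i j, (i < d)%nat -> (j < d)%nat -> i <> j -> z i <> z j) ->
  (forall i, (i < d)%nat -> p (z i) = 0) -> forall x, p x = 0.
Proof.
  revert p; induction d as [|d IH]; intros p Hp Hz Hroot; [exact Hp|].
  destruct (is_poly_factor d p (z d) Hp) as [q [Hq E]].
  rewrite Hroot in E by lia.
  assert (Hq0 : forall x, q x = 0).
  { apply (IH q Hq); [intros; apply Hz; lia|].
    intros i Hi.
    assert (Hpi := Hroot i ltac:(lia)); rewrite E, Rplus_0_l in Hpi.
    assert (z i - z d <> 0) by (apply Rminus_eq_contra, Hz; lia).
    apply Rmult_integral in Hpi as [|]; [contradiction | lra]. }
  intros x; rewrite E, Hq0; ring.
Qed.

Lemma is_poly_continuous d p : is_poly d p -> forall x, continuous p x.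
Proof.
  revert p; induction d as [|d IH]; simpl; intros p Hp x.
  - apply continuous_ext with (fun _ => 0); [intros; rewrite Hp; auto | apply continuous_const].
  - destruct Hp as [a [q [Hq E]]].
    apply continuous_ext with (fun x => a + x * q x); [intros; rewrite E; auto|].
    apply (@continuous_plus R_UniformSpace R_AbsRing R_NormedModule (fun _ => a)).
    + apply continuous_const.
    + apply (@continuous_mult R_UniformSpace R_AbsRing (fun x => x) q).
      * apply continuous_id.
      * apply IH; auto.
Qed.

Lemma continuous_on_minus (D : R -> Prop) (g q : R -> R) :
  continuous_on D g -> continuous_on D q -> continuous_on D (fun x => g x - q x).
Proof.
  intros Hg Hq x Dx.
  apply (filterlim_comp_2 (G := locally (g x)) (H := locally (opp (q x)))
           g (fun x => opp (q x)) plus).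
  - apply Hg; auto.
  - apply filterlim_comp with (1 := Hq x Dx), (filterlim_opp (V := R_NormedModule)).
  - apply (filterlim_plus (V := R_NormedModule)).
Qed.

(* Stdlib's mean value and extreme value theorems ask for two-sided continuity
   at the endpoints: extend [g] by constants outside [a, b]. *)
Definition clamp (a b x : R) : R := Rmin b (Rmax a x).

Lemma clamp_in a b x : a <= b -> a <= clamp a b x <= b.
Proof. intros; unfold clamp, Rmin, Rmax; repeat destruct Rle_dec; lra. Qed.

Lemma clamp_id a b x : a <= x <= b -> clamp a b x = x.
Proof. intros; unfold clamp, Rmin, Rmax; repeat destruct Rle_dec; lra. Qed.

Lemma clamp_dist a b x z : a <= b -> Rabs (clamp a b z - clamp a b x) <= Rabs (z - x).
Proof.
  intros; unfold clamp, Rmin, Rmax; repeat destruct Rle_dec;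
    unfold Rabs; repeat destruct Rcase_abs; lra.
Qed.

Lemma continuous_on_clamp (g : R -> R) (a b : R) : a <= b ->
  continuous_on (fun x => a <= x <= b) g -> forall x, continuous (fun z => g (clamp a b z)) x.
Proof.
  intros Hab Hg x; apply filterlim_locally; intros eps.
  destruct (proj1 (filterlim_locally _ _) (Hg _ (clamp_in a b x Hab)) eps) as [d Hd].
  exists d; intros z Hz; apply Hd.
  - eapply Rle_lt_trans; [apply clamp_dist; auto | apply Hz].
  - apply clamp_in; auto.
Qed.

Lemma continuous_on_bounded (g : R -> R) (a b : R) : a <= b -> continuous_on (fun x => a <= x <= b) g ->
  exists K, forall t, a <= t <= b -> Rabs (g t) <= K.
Proof.
  intros Hab Hg.
  destruct (continuity_ab_maj (fun z => Rabs (g (clamp a b z))) a b Hab) as [m [Hm _]].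
  - intros c _; apply continuity_pt_filterlim.
    apply (continuous_comp (fun z => g (clamp a b z)) Rabs); [apply continuous_on_clamp; auto|].
    apply continuity_pt_filterlim, Rcontinuity_abs.
  - exists (Rabs (g (clamp a b m))); intros t Ht.
    specialize (Hm t Ht); simpl in Hm; rewrite clamp_id in Hm; auto.
Qed.

Lemma mvt_le (F F' : R -> R) a b B : a < b -> continuous_on (fun x => a <= x <= b) F ->
  (forall x, a < x < b -> is_derive F x (F' x)) -> (forall x, a < x < b -> Rabs (F' x) <= B) ->
  Rabs (F b - F a) <= B * (b - a).
Proof.
  intros Hab Hc Hd HB.
  set (G := fun z => F (clamp a b z)).
  assert (HG : forall z, a <= z <= b -> G z = F z) by (intros; unfold G; rewrite clamp_id; auto).
  assert (HdG : forall x, a < x < b -> is_derive G x (F' x)).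
  { intros x Hx; apply is_derive_ext_loc with F; [|apply Hd; auto].
    assert (Hr : 0 < Rmin (x - a) (b - x)) by (apply Rmin_glb_lt; lra).
    exists (mkposreal _ Hr); intros t Ht.
    change (Rabs (t - x) < Rmin (x - a) (b - x)) in Ht.
    assert (Hta : Rabs (t - x) < x - a) by (eapply Rlt_le_trans; [apply Ht | apply Rmin_l]).
    assert (Htb : Rabs (t - x) < b - x) by (eapply Rlt_le_trans; [apply Ht | apply Rmin_r]).
    apply Rabs_def2 in Hta; apply Rabs_def2 in Htb.
    rewrite HG; auto; lra. }
  set (pr1 := fun c (P : a < c < b) => exist (fun l => derivable_pt_lim G c l) (F' c)
                 (proj1 (is_derive_Reals _ _ _) (HdG c P))).
  set (pr2 := fun c (P : a < c < b) => derivable_pt_id c).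
  destruct (MVT G id a b pr1 pr2 Hab) as [c [P E]].
  - intros x _; apply continuity_pt_filterlim, continuous_on_clamp; auto; lra.
  - intros x _; apply derivable_continuous_pt, derivable_pt_id.
  - unfold pr2 in E; rewrite derive_pt_id in E; simpl in E; unfold id in E.
    rewrite <- !HG by lra; replace (G b - G a) with ((b - a) * F' c) by lra.
    rewrite Rabs_mult, Rabs_right, Rmult_comm by lra.
    apply Rmult_le_compat_r; [lra | apply HB; auto].
Qed.

Lemma mvt_abs_le (F F' : R -> R) lo hi a b B : lo <= a <= hi -> lo <= b <= hi ->
  continuous_on (fun x => lo <= x <= hi) F ->
  (forall x, lo < x < hi -> is_derive F x (F' x)) -> (forall x, lo < x < hi -> Rabs (F' x) <= B) ->
  Rabs (F b - F a) <= B * Rabs (b - a).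
Proof.
  intros Ha Hb Hc Hd HB.
  assert (sub : forall u v, lo <= u -> u < v -> v <= hi -> Rabs (F v - F u) <= B * (v - u)).
  { intros u v Hu Huv Hv; apply mvt_le with F'; auto.
    - apply continuous_on_subset with (2 := Hc); intros; lra.
    - intros; apply Hd; lra.
    - intros; apply HB; lra. }
  destruct (Rtotal_order a b) as [Hab|[->|Hab]].
  - rewrite (Rabs_right (b - a)) by lra; apply sub; lra.
  - rewrite !Rminus_diag, Rabs_R0; lra.
  - rewrite <- Rabs_Ropp, Ropp_minus_distr, (Rabs_left (b - a)), Ropp_minus_distr by lra.
    apply sub; lra.
Qed.

Definition taylor_poly (c : nat -> R) (n : nat) (t : R) : R :=
  sumR n (fun j => c j * t ^ j / INR (fact j)).

Lemma taylor_poly_0 c n : taylor_poly c (S n) 0 = c O.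
Proof.
  induction n as [|n IH]; unfold taylor_poly in *; simpl in *; [field|].
  rewrite IH; unfold Rdiv; ring.
Qed.

Lemma taylor_poly_is_poly c n : is_poly n (taylor_poly c n).
Proof.
  apply is_poly_sum; intros j Hj.
  apply is_poly_ext with (fun t => c j / INR (fact j) * t ^ j); [|intros; unfold Rdiv; ring].
  apply is_poly_scal, is_poly_le with (S j); [lia | apply is_poly_pow].
Qed.

Lemma monomial_derive a n t :
  is_derive (fun t => a * t ^ S n / INR (fact (S n))) t (a * t ^ n / INR (fact n)).
Proof.
  auto_derive; auto.
  change (match n with O => 1 | S _ => INR n + 1 end) with (INR (S n)).
  change (fact n + n * fact n)%nat with (S n * fact n)%nat.
  rewrite mult_INR.
  assert (INR (fact n) <> 0) by apply INR_fact_neq_0.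
  assert (INR (S n) <> 0) by (apply not_0_INR; lia).
  field; auto.
Qed.

Lemma taylor_poly_derive c n t :
  is_derive (taylor_poly c (S n)) t (taylor_poly (fun j => c (S j)) n t).
Proof.
  revert t; induction n as [|n IH]; intros t.
  - apply is_derive_ext with (fun _ => c O); [intros; unfold taylor_poly; simpl; field|].
    apply (is_derive_const (K := R_AbsRing) (V := R_NormedModule)).
  - apply (is_derive_plus (K := R_AbsRing) (V := R_NormedModule)
             (taylor_poly c (S n)) (fun t => c (S n) * t ^ S n / INR (fact (S n)))).
    + apply IH.
    + apply monomial_derive.
Qed.

Definition taylor_antideriv (c : nat -> R) (j : nat) : R :=
  match j with O => 0 | S j => c j end.

Lemma taylor_poly_antideriv c n t :
  is_derive (taylor_poly (taylor_antideriv c) (S n)) t (taylor_poly c n t).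
Proof. apply taylor_poly_derive. Qed.

(* Iterating the mean value theorem from the [n]-th derivative down to the
   [k]-th one, each step gaining one power of [t] since remainders vanish at 0. *)
Lemma taylor_remainder (D : nat -> R -> R) n T K : 0 < T ->
  (forall k t, (k < n)%nat -> 0 < t < T -> is_derive (D k) t (D (S k) t)) ->
  (forall k, (k <= n)%nat -> continuous_on (fun x => 0 <= x <= T) (D k)) ->
  (forall t, 0 <= t <= T -> Rabs (D n t) <= K) ->
  forall i k, (k + i = n)%nat -> forall t, 0 <= t <= T ->
    Rabs (D k t - taylor_poly (fun j => D (k + j)%nat 0) i t) <= K * t ^ i.
Proof.
  intros HT Hd Hc HK.
  induction i as [|i IH]; intros k Hki t Ht.
  - replace k with n by lia; unfold taylor_poly; simpl.
    rewrite Rminus_0_r, Rmult_1_r; apply HK; auto.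
  - set (F := fun s => D k s - taylor_poly (fun j => D (k + j)%nat 0) (S i) s).
    assert (F0 : F 0 = 0) by (unfold F; rewrite taylor_poly_0, Nat.add_0_r; ring).
    change (Rabs (F t) <= K * t ^ S i).
    replace (F t) with (F t - F 0) by lra.
    replace (K * t ^ S i) with (K * t ^ i * Rabs (t - 0))
      by (rewrite Rminus_0_r, Rabs_right by lra; simpl; ring).
    apply mvt_abs_le with (fun s => D (S k) s - taylor_poly (fun j => D (S k + j)%nat 0) i s) 0 t;
      try lra.
    + apply continuous_on_minus.
      * apply continuous_on_subset with (2 := Hc k ltac:(lia)); intros; lra.
      * apply continuous_on_forall; intros.
        apply (is_poly_continuous (S i)), taylor_poly_is_poly.
    + intros x Hx.
      apply (is_derive_minus (K := R_AbsRing) (V := R_NormedModule)); [apply Hd; lia + lra|].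
      replace (taylor_poly (fun j => D (S k + j)%nat 0) i x)
        with (taylor_poly (fun j => D (k + S j)%nat 0) i x)
        by (apply sumR_ext; intros; rewrite Nat.add_succ_r; reflexivity).
      apply taylor_poly_derive.
    + intros x Hx; eapply Rle_trans; [apply IH; lia + lra|].
      assert (0 <= K) by (eapply Rle_trans; [apply Rabs_pos | apply (HK 0); lra]).
      apply Rmult_le_compat_l, pow_incr; lra.
Qed.

Lemma CM_taylor_bound M g T : 0 < T -> CM_on M g 0 T ->
  exists K c, 0 <= K /\
    forall t, 0 <= t <= T -> Rabs (g t - taylor_poly c M t) <= K * t ^ M.
Proof.
  intros HT [D [D0 [Dd Dc]]].
  destruct (continuous_on_bounded (D M) 0 T ltac:(lra)) as [K HK]; [intros t; apply Dc; auto|].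
  exists K, (fun j => D j 0); split.
  - eapply Rle_trans; [apply Rabs_pos | apply (HK 0); lra].
  - intros t Ht; rewrite <- D0 by auto.
    apply (taylor_remainder D M T K HT Dd) with (k := O); auto.
    intros k Hk t'; apply Dc; auto.
Qed.

Section InterpolatoryQuadrature.

Variables (M : nat) (xi : nat -> R).
Hypothesis xi_incr : forall m, (1 <= m < M)%nat -> xi m < xi (S m).

Lemma xi_lt a b : (1 <= a)%nat -> (a < b)%nat -> (b <= M)%nat -> xi a < xi b.
Proof.
  intros Ha Hab Hb; induction Hab.
  - apply xi_incr; lia.
  - eapply Rlt_trans; [apply IHHab; lia | apply xi_incr; lia].
Qed.

Lemma xi_le a b : (1 <= a)%nat -> (a <= b)%nat -> (b <= M)%nat -> xi a <= xi b.
Proof.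
  intros; destruct (Nat.eq_dec a b) as [->|]; [lra | left; apply xi_lt; lia].
Qed.

Lemma xi_inj i j : (i < M)%nat -> (j < M)%nat -> i <> j -> xi (S i) <> xi (S j).
Proof.
  intros; destruct (Nat.lt_gt_cases i j) as [[Hij|Hji] _]; auto.
  - apply Rlt_not_eq, xi_lt; lia.
  - apply not_eq_sym, Rlt_not_eq, xi_lt; lia.
Qed.

Lemma xi_in_unit : 0 <= xi 1%nat -> xi M <= 1 -> forall m, (1 <= m <= M)%nat -> 0 <= xi m <= 1.
Proof.
  intros H1 HM m Hm; split.
  - apply Rle_trans with (xi 1%nat); auto; apply xi_le; lia.
  - apply Rle_trans with (xi M); auto; apply xi_le; lia.
Qed.

Lemma lagrange_S k m x : lagrange (S k) xi m x = lagrange k xi m x *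
  (if Nat.eq_dec (S k) m then 1 else / (xi m - xi (S k)) * x + - xi (S k) / (xi m - xi (S k))).
Proof.
  unfold lagrange; cbn [prodR]; f_equal.
  destruct (Nat.eq_dec (S k) m); auto; unfold Rdiv; ring.
Qed.

(* The degree drops once the product contains the constant factor of index [m - 1]. *)
Lemma lagrange_prefix_poly m k :
  is_poly (S k) (lagrange k xi m) /\ ((1 <= m <= k)%nat -> is_poly k (lagrange k xi m)).
Proof.
  induction k as [|k [IH1 IH2]].
  - split; [|lia].
    exists 1, (fun _ => 0); split; [apply is_poly_0 | intros; unfold lagrange; simpl; ring].
  - destruct (Nat.eq_dec (S k) m) as [Hkm|Hkm].
    + assert (E : forall x, lagrange k xi m x = lagrange (S k) xi m x)
        by (intros x; rewrite lagrange_S; destruct Nat.eq_dec; [ring | contradiction]).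
      split; [apply is_poly_S|]; intros; apply is_poly_ext with (1 := IH1); auto.
    + set (a := / (xi m - xi (S k))); set (b := - xi (S k) / (xi m - xi (S k))).
      assert (E : forall x, lagrange k xi m x * (a * x + b) = lagrange (S k) xi m x)
        by (intros x; rewrite lagrange_S; destruct Nat.eq_dec; [contradiction | reflexivity]).
      split; [|intros Hm]; eapply is_poly_ext; try apply E; apply is_poly_mul_affine; auto.
      apply IH2; lia.
Qed.

Lemma lagrange_poly m : (1 <= m <= M)%nat -> is_poly M (lagrange M xi m).
Proof. intros Hm; apply (proj2 (lagrange_prefix_poly m M)); auto. Qed.

Lemma lagrange_node_eq i : (i < M)%nat -> lagrange M xi (S i) (xi (S i)) = 1.
Proof.
  intros Hi; apply prodR_one; intros j Hj.
  destruct (Nat.eq_dec (S j) (S i)); auto.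
  field; apply Rminus_eq_contra, xi_inj; lia.
Qed.

Lemma lagrange_node_neq i k : (i < M)%nat -> (k < M)%nat -> i <> k ->
  lagrange M xi (S i) (xi (S k)) = 0.
Proof.
  intros; apply prodR_zero with k; auto.
  destruct (Nat.eq_dec (S k) (S i)); [lia|]; unfold Rdiv; ring.
Qed.

Lemma lagrange_interp p : is_poly M p ->
  forall s, sumR M (fun i => lagrange M xi (S i) s * p (xi (S i))) = p s.
Proof.
  intros Hp s.
  enough (forall s, sumR M (fun i => lagrange M xi (S i) s * p (xi (S i))) - p s = 0)
    by (specialize (H s); lra).
  apply (is_poly_roots_eq0 M _ (fun i => xi (S i))).
  - apply is_poly_plus.
    + apply is_poly_sum; intros j Hj.
      apply is_poly_ext with (fun x => p (xi (S j)) * lagrange M xi (S j) x); [|intros; ring].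
      apply is_poly_scal, lagrange_poly; lia.
    + apply is_poly_ext with (fun x => -1 * p x); [apply is_poly_scal; auto | intros; ring].
  - intros; apply xi_inj; auto.
  - intros k Hk; rewrite (sumR_delta M _ k Hk).
    + rewrite lagrange_node_eq; auto; ring.
    + intros i Hi Hik; rewrite lagrange_node_neq; auto; ring.
Qed.

Lemma lagrange_quadrature_exact p a b : is_poly M p ->
  is_RInt p a b (sumR M (fun i => RInt (lagrange M xi (S i)) a b * p (xi (S i)))).
Proof.
  intros Hp.
  assert (partial : forall k, (k <= M)%nat ->
    is_RInt (fun s => sumR k (fun i => lagrange M xi (S i) s * p (xi (S i)))) a b
            (sumR k (fun i => RInt (lagrange M xi (S i)) a b * p (xi (S i))))).
  { induction k as [|k IH]; intros Hk; simpl.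
    - assert (H0 := is_RInt_const (V := R_NormedModule) a b zero).
      rewrite (scal_zero_r (V := R_ModuleSpace)) in H0; exact H0.
    - apply (is_RInt_plus (V := R_NormedModule)); [apply IH; lia|].
      apply is_RInt_ext with (fun s => scal (p (xi (S k))) (lagrange M xi (S k) s));
        [intros; apply Rmult_comm|].
      rewrite Rmult_comm; apply (is_RInt_scal (V := R_NormedModule)).
      apply (RInt_correct (V := R_CompleteNormedModule)), ex_RInt_continuous; intros z _.
      apply (is_poly_continuous M), lagrange_poly; lia. }
  apply is_RInt_ext with (2 := partial M (le_n M)).
  intros; apply lagrange_interp; auto.
Qed.

Lemma quadrature_exact_taylor c h a b :
  h * sumR M (fun i => RInt (lagrange M xi (S i)) a b * taylor_poly c M (xi (S i) * h))
  = taylor_poly (taylor_antideriv c) (S M) (b * h)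
    - taylor_poly (taylor_antideriv c) (S M) (a * h).
Proof.
  set (Q := taylor_poly (taylor_antideriv c) (S M)).
  assert (Hpoly : is_poly M (fun s => h * taylor_poly c M (s * h)))
    by apply is_poly_scal, is_poly_scale_arg, taylor_poly_is_poly.
  assert (quad := lagrange_quadrature_exact _ a b Hpoly).
  assert (ftc : is_RInt (fun s => h * taylor_poly c M (s * h)) a b
                  (minus (Q (b * h)) (Q (a * h)))).
  { apply (is_RInt_derive (fun s => Q (s * h))).
    - intros x _; apply (is_derive_comp Q (fun s => s * h)); [apply taylor_poly_antideriv|].
      auto_derive; auto; ring.
    - intros x _; apply (is_poly_continuous M), Hpoly. }
  apply (is_RInt_unique (V := R_CompleteNormedModule)) in quad, ftc.
  rewrite <- sumR_scal; etransitivity; [|apply ftc].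
  rewrite quad; apply sumR_ext; intros; ring.
Qed.

(* By exactness on [P := taylor_poly c M], only [g - P] contributes: at the
   nodes, and at the endpoints through [Y] minus an antiderivative of [P]. *)
Lemma quadrature_error (Y g : R -> R) (c : nat -> R) (h a b eps : R) :
  0 < h -> 0 <= a <= 1 -> 0 <= b <= 1 ->
  (forall m, (1 <= m <= M)%nat -> 0 <= xi m <= 1) ->
  continuous_on (fun t => 0 <= t <= h) Y ->
  (forall t, 0 < t < h -> is_derive Y t (g t)) ->
  (forall t, 0 <= t <= h -> Rabs (g t - taylor_poly c M t) <= eps) ->
  Rabs (Y (b * h) - Y (a * h)
        - h * sumR M (fun i => RInt (lagrange M xi (S i)) a b * g (xi (S i) * h)))
  <= eps * h * (1 + sumR M (fun i => Rabs (RInt (lagrange M xi (S i)) a b))).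
Proof.
  intros Hh Ha Hb Hxi HYc HYd Hg.
  set (w i := RInt (lagrange M xi (S i)) a b).
  change (Rabs (Y (b * h) - Y (a * h) - h * sumR M (fun i => w i * g (xi (S i) * h)))
          <= eps * h * (1 + sumR M (fun i => Rabs (w i)))).
  set (P := taylor_poly c M); set (Q := taylor_poly (taylor_antideriv c) (S M)).
  assert (exact : h * sumR M (fun i => w i * P (xi (S i) * h)) = Q (b * h) - Q (a * h))
    by apply quadrature_exact_taylor.
  assert (eps_nonneg : 0 <= eps) by (eapply Rle_trans; [apply Rabs_pos | apply (Hg 0); lra]).
  assert (smooth : Rabs ((Y (b * h) - Q (b * h)) - (Y (a * h) - Q (a * h))) <= eps * h).
  { eapply Rle_trans.
    - apply (mvt_abs_le (fun s => Y s - Q s) (fun s => g s - P s) 0 h); try nra.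
      + apply continuous_on_minus; auto.
        apply continuous_on_forall; intros; apply (is_poly_continuous (S M)), taylor_poly_is_poly.
      + intros x Hx; apply (is_derive_minus (K := R_AbsRing) (V := R_NormedModule)); auto.
        apply taylor_poly_antideriv.
      + intros; apply Hg; lra.
    - apply Rmult_le_compat_l; auto.
      apply Rabs_le; nra. }
  assert (nodes : Rabs (h * sumR M (fun i => w i * (g (xi (S i) * h) - P (xi (S i) * h))))
                  <= h * (sumR M (fun i => Rabs (w i)) * eps)).
  { rewrite Rabs_mult, Rabs_right by lra; apply Rmult_le_compat_l; [lra|].
    apply sumR_abs_le; intros i Hi; apply Hg.
    assert (0 <= xi (S i) <= 1) by (apply Hxi; lia); split; nra. }
  replace (Y (b * h) - Y (a * h) - h * sumR M (fun i => w i * g (xi (S i) * h)))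
    with ((Y (b * h) - Q (b * h)) - (Y (a * h) - Q (a * h))
          - h * sumR M (fun i => w i * (g (xi (S i) * h) - P (xi (S i) * h)))).
  - eapply Rle_trans; [apply Rabs_triang|]; rewrite Rabs_Ropp.
    replace (eps * h * (1 + sumR M (fun i => Rabs (w i))))
      with (eps * h + h * (sumR M (fun i => Rabs (w i)) * eps)) by ring.
    lra.
  - rewrite (sumR_ext _ _ (fun i => w i * g (xi (S i) * h) - w i * P (xi (S i) * h)))
      by (intros; ring).
    rewrite sumR_minus; lra.
Qed.

End InterpolatoryQuadrature.

Lemma lipschitz_const_nonneg (f : R -> R) L :
  (forall u v, Rabs (f u - f v) <= L * Rabs (u - v)) -> 0 <= L.
Proof.
  intros HL; specialize (HL 1 0).
  rewrite Rminus_0_r, Rabs_R1, Rmult_1_r in HL.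
  eapply Rle_trans; [apply Rabs_pos | exact HL].
Qed.

Lemma exp_le_exp x y : x <= y -> exp x <= exp y.
Proof. intros [Hlt | ->]; [left; apply exp_increasing; auto | right; reflexivity]. Qed.

Lemma discrete_gronwall (u : nat -> R) (c B : R) (n : nat) :
  0 <= c -> 0 <= B -> 0 <= u O ->
  (forall k, (k < n)%nat -> u (S k) <= (1 + c) * u k + B) ->
  forall k, (k <= n)%nat -> u k <= exp (INR n * c) * (u O + INR n * B).
Proof.
  intros Hc HB Hu0 Hstep.
  assert (Hexp : forall k, 1 <= exp (INR k * c)).
  { intros k; rewrite <- exp_0; apply exp_le_exp.
    apply Rmult_le_pos; [apply pos_INR | auto]. }
  assert (Hk : forall k, (k <= n)%nat -> u k <= exp (INR k * c) * (u O + INR k * B)).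
  { induction k as [|k IH]; intros Hkn; [simpl; rewrite Rmult_0_l, exp_0; lra|].
    specialize (IH ltac:(lia)); specialize (Hstep k ltac:(lia)).
    rewrite S_INR, Rmult_plus_distr_r, Rmult_1_l, exp_plus.
    set (X := exp (INR k * c)) in *; set (Y := u O + INR k * B) in *.
    assert (Hec : 1 + c <= exp c) by apply exp_ineq1_le.
    assert (HY : 0 <= Y) by (pose proof (pos_INR k); unfold Y; nra).
    assert (HX : 1 <= X) by apply Hexp.
    assert ((1 + c) * u k <= (1 + c) * (X * Y)) by (apply Rmult_le_compat_l; lra).
    assert ((1 + c) * (X * Y) <= exp c * (X * Y)) by (apply Rmult_le_compat_r; nra).
    assert (1 <= X * exp c) by (rewrite <- (Rmult_1_l 1); apply Rmult_le_compat; lra).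
    assert (B <= X * exp c * B) by (rewrite <- (Rmult_1_l B) at 1; apply Rmult_le_compat_r; lra).
    replace (X * exp c * (u O + (INR k + 1) * B)) with (exp c * (X * Y) + X * exp c * B)
      by (unfold Y; ring).
    lra. }
  intros k Hkn; eapply Rle_trans; [apply Hk; auto|].
  assert (INR k <= INR n) by (apply le_INR; auto).
  apply Rmult_le_compat.
  - pose proof (Hexp k); lra.
  - pose proof (pos_INR k); nra.
  - apply exp_le_exp; nra.
  - nra.
Qed.

Definition weight_bound (M : nat) (xi : nat -> R) : R :=
  maxR (num_sub M xi) (fun k => sumR M (fun i => Rabs (weight M xi (S k) (S i)))).

Lemma weight_S M xi k m :
  weight M xi (S k) m = RInt (lagrange M xi m) (xiR M xi k) (xiR M xi (S k)).
Proof. unfold weight; replace (S k - 1)%nat with k by lia; reflexivity. Qed.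

Lemma xiR_node M xi n : (1 <= M)%nat -> (1 <= n < num_sub M xi)%nat ->
  xiR M xi n = xi (node_of M xi n) /\ (1 <= node_of M xi n <= M)%nat.
Proof.
  intros HM Hn; unfold xiR, node_of, num_sub in *.
  destruct n as [|n]; [lia|].
  destruct (Req_EM_T (xi 1%nat) 0), (Req_EM_T (xi M) 1);
    (destruct (Nat.eq_dec (S n) _); [lia|]); split; auto; lia.
Qed.

Lemma xiR_unit M xi n : (1 <= M)%nat -> (forall m, (1 <= m <= M)%nat -> 0 <= xi m <= 1) ->
  (n <= num_sub M xi)%nat -> 0 <= xiR M xi n <= 1.
Proof.
  intros HM Hxi Hn; destruct n as [|n]; [simpl; lra|].
  destruct (Nat.eq_dec (S n) (num_sub M xi)) as [E|E].
  - unfold xiR; rewrite <- E; destruct (Nat.eq_dec (S n) (S n)); [lra | congruence].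
  - destruct (xiR_node M xi (S n) HM ltac:(lia)) as [-> Hm]; apply Hxi; auto.
Qed.

Lemma node_err_ge M xi h vp y i : (i < M)%nat ->
  Rabs (vp (S i) - y (xi (S i) * h)) <= node_err M xi h vp y.
Proof. apply (maxR_ge M (fun i => Rabs (vp (S i) - y (xi (S i) * h)))). Qed.

Section SweepError.

Variables (f : R -> R) (L : R) (M : nat) (xi : nat -> R) (T : R) (y : R -> R).
Hypothesis f_lip : forall u v, Rabs (f u - f v) <= L * Rabs (u - v).
Hypothesis M_pos : (1 <= M)%nat.
Hypothesis xi_incr : forall m, (1 <= m < M)%nat -> xi m < xi (S m).
Hypothesis xi_unit : forall m, (1 <= m <= M)%nat -> 0 <= xi m <= 1.
Hypothesis y_cont : continuous_on (fun t => 0 <= t <= T) y.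
Hypothesis y_deriv : forall t, 0 < t < T -> is_derive y t (f (y t)).
Variables (K : R) (c : nat -> R).
Hypothesis K_nonneg : 0 <= K.
Hypothesis fy_taylor : forall t, 0 <= t <= T -> Rabs (f (y t) - taylor_poly c M t) <= K * t ^ M.
Variables (h eta0 : R) (gp vp : nat -> R).
Hypothesis h_range : 0 < h <= T.
Hypothesis gp_start : gp O = eta0 \/ (xi 1%nat = 0 /\ gp O = vp 1%nat).
Hypothesis gp_nodes : forall n, (1 <= n < num_sub M xi)%nat -> gp n = vp (node_of M xi n).

Local Notation eta := (sdc_next f h M xi eta0 gp vp).
Local Notation err k := (eta k - y (xiR M xi k * h)).
Local Notation E := (node_err M xi h vp y).

Lemma previous_iterate_close k : (k < num_sub M xi)%nat ->
  Rabs (eta k - gp k) <= Rabs (err k) + E.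
Proof.
  intros Hk.
  assert (E_nonneg : 0 <= E) by apply maxR_nonneg.
  assert (split_at : forall z, Rabs (eta k - gp k) <= Rabs (eta k - z) + Rabs (gp k - z)).
  { intros z; replace (eta k - gp k) with ((eta k - z) - (gp k - z)) by ring.
    eapply Rle_trans; [apply Rabs_triang | rewrite Rabs_Ropp; lra]. }
  destruct k as [|k].
  - change (xiR M xi 0) with 0; destruct gp_start as [G0 | [X1 G0]].
    + replace (gp O) with (eta O) by (simpl; auto).
      rewrite Rminus_diag, Rabs_R0; pose proof (Rabs_pos (eta O - y (0 * h))); lra.
    + eapply Rle_trans; [apply (split_at (y (xi 1%nat * h)))|].
      rewrite G0, X1; pose proof (node_err_ge M xi h vp y O ltac:(lia)); rewrite X1 in *; lra.
  - destruct (xiR_node M xi (S k) M_pos ltac:(lia)) as [-> Hm].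
    eapply Rle_trans; [apply (split_at (y (xi (node_of M xi (S k)) * h)))|].
    rewrite gp_nodes by lia.
    destruct (node_of M xi (S k)) as [|i]; [lia|].
    pose proof (node_err_ge M xi h vp y i ltac:(lia)); lra.
Qed.

Lemma local_defect_bound k : (k < num_sub M xi)%nat ->
  Rabs (y (xiR M xi (S k) * h) - y (xiR M xi k * h)
        - h * sumR M (fun i => weight M xi (S k) (S i) * f (y (xi (S i) * h))))
  <= K * (1 + weight_bound M xi) * h ^ S M.
Proof.
  intros Hk.
  assert (Q := quadrature_error M xi xi_incr y (fun t => f (y t)) c h
                 (xiR M xi k) (xiR M xi (S k)) (K * h ^ M)).
  rewrite (sumR_ext M (fun i => RInt _ _ _ * _) (fun i => weight M xi (S k) (S i) * f (y (xi (S i) * h))))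
    in Q by (intros; rewrite weight_S; reflexivity).
  rewrite (sumR_ext M (fun i => Rabs (RInt _ _ _)) (fun i => Rabs (weight M xi (S k) (S i))))
    in Q by (intros; rewrite weight_S; reflexivity).
  eapply Rle_trans; [apply Q|]; clear Q.
  - lra.
  - apply xiR_unit; auto; lia.
  - apply xiR_unit; auto; lia.
  - auto.
  - apply continuous_on_subset with (2 := y_cont); intros; lra.
  - intros; apply y_deriv; lra.
  - intros t Ht; eapply Rle_trans; [apply fy_taylor; lra|].
    apply Rmult_le_compat_l, pow_incr; lra.
  - assert (sumR M (fun i => Rabs (weight M xi (S k) (S i))) <= weight_bound M xi)
      by (apply (maxR_ge _ (fun k => sumR M (fun i => Rabs (weight M xi (S k) (S i))))); auto).
    assert (0 <= K * h ^ M * h) by (apply Rmult_le_pos; [apply Rmult_le_pos, pow_le|]; lra).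
    replace (K * (1 + weight_bound M xi) * h ^ S M)
      with (K * h ^ M * h * (1 + weight_bound M xi)) by (simpl; ring).
    apply Rmult_le_compat_l; lra.
Qed.

Lemma sdc_error_step k : (k < num_sub M xi)%nat ->
  Rabs (err (S k)) <= (1 + h * L) * Rabs (err k)
    + (h * L * (1 + weight_bound M xi) * E + K * (1 + weight_bound M xi) * h ^ S M).
Proof.
  intros Hk.
  set (W := weight_bound M xi).
  assert (Ha : 0 <= xiR M xi k <= 1) by (apply xiR_unit; auto; lia).
  assert (Hb : 0 <= xiR M xi (S k) <= 1) by (apply xiR_unit; auto; lia).
  assert (L_nonneg := lipschitz_const_nonneg f L f_lip).
  assert (E_nonneg : 0 <= E) by apply maxR_nonneg.
  set (w i := weight M xi (S k) (S i)).
  set (X1 := (xiR M xi (S k) - xiR M xi k) * h * (f (eta k) - f (gp k))).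
  set (X2 := h * sumR M (fun i => w i * (f (vp (S i)) - f (y (xi (S i) * h))))).
  set (rho := y (xiR M xi (S k) * h) - y (xiR M xi k * h) - h * sumR M (fun i => w i * f (y (xi (S i) * h)))).
  assert (recursion : err (S k) = err k + X1 + X2 - rho).
  { unfold X1, X2, rho; cbn [sdc_next].
    rewrite (sumR_ext _ (fun i => w i * (f (vp (S i)) - f (y (xi (S i) * h))))
               (fun i => w i * f (vp (S i)) - w i * f (y (xi (S i) * h)))) by (intros; ring).
    rewrite sumR_minus; unfold w; ring. }
  assert (BX1 : Rabs X1 <= h * (L * (Rabs (err k) + E))).
  { unfold X1; rewrite !Rabs_mult, (Rabs_right h) by lra.
    assert (Rabs (xiR M xi (S k) - xiR M xi k) <= 1) by (apply Rabs_le; lra).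
    assert (Rabs (f (eta k) - f (gp k)) <= L * (Rabs (err k) + E)).
    { eapply Rle_trans; [apply f_lip|].
      apply Rmult_le_compat_l, previous_iterate_close; auto. }
    apply Rle_trans with (1 * h * Rabs (f (eta k) - f (gp k))).
    - apply Rmult_le_compat_r; [apply Rabs_pos|]; apply Rmult_le_compat_r; lra.
    - rewrite Rmult_1_l; apply Rmult_le_compat_l; lra. }
  assert (BX2 : Rabs X2 <= h * (W * (L * E))).
  { unfold X2; rewrite Rabs_mult, (Rabs_right h) by lra.
    apply Rmult_le_compat_l; [lra|].
    apply Rle_trans with (sumR M (fun i => Rabs (w i)) * (L * E)).
    - apply sumR_abs_le; intros i Hi; eapply Rle_trans; [apply f_lip|].
      apply Rmult_le_compat_l, node_err_ge; auto.
    - apply Rmult_le_compat_r; [apply Rmult_le_pos; auto|].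
      apply (maxR_ge _ (fun k => sumR M (fun i => Rabs (weight M xi (S k) (S i))))); auto. }
  assert (Brho : Rabs rho <= K * (1 + W) * h ^ S M) by (apply local_defect_bound; auto).
  assert (Rabs (err (S k)) <= Rabs (err k) + Rabs X1 + Rabs X2 + Rabs rho).
  { rewrite recursion.
    pose proof (Rabs_triang (err k + X1 + X2) (- rho)); pose proof (Rabs_triang (err k + X1) X2);
      pose proof (Rabs_triang (err k) X1); rewrite Rabs_Ropp in *; unfold Rminus in *; lra. }
  lra.
Qed.

Lemma sdc_error_bound n : (n <= num_sub M xi)%nat ->
  Rabs (err n) <= exp (INR (num_sub M xi) * h * L) * Rabs (eta0 - y 0)
    + exp (INR (num_sub M xi) * T * L) * INR (num_sub M xi)
      * (h * L * (1 + weight_bound M xi) * E + K * (1 + weight_bound M xi) * h ^ S M).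
Proof.
  intros Hn.
  set (N := num_sub M xi); set (W := weight_bound M xi).
  set (B := h * L * (1 + W) * E + K * (1 + W) * h ^ S M).
  assert (L_nonneg := lipschitz_const_nonneg f L f_lip).
  assert (B_nonneg : 0 <= B).
  { assert (0 <= W) by apply maxR_nonneg; assert (0 <= E) by apply maxR_nonneg.
    assert (0 <= h * L * (1 + W) * E) by (repeat apply Rmult_le_pos; lra).
    assert (0 <= K * (1 + W) * h ^ S M) by (apply Rmult_le_pos; [nra | apply pow_le; lra]).
    unfold B; lra. }
  assert (gronwall : Rabs (err n) <= exp (INR N * (h * L)) * (Rabs (err O) + INR N * B)).
  { apply (discrete_gronwall (fun k => Rabs (err k))); auto using Rabs_pos.
    - apply Rmult_le_pos; lra.
    - intros k Hk; apply sdc_error_step; auto. }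
  change (eta O - y (xiR M xi 0 * h)) with (eta0 - y (0 * h)) in gronwall.
  rewrite Rmult_0_l in gronwall.
  assert (exp (INR N * (h * L)) <= exp (INR N * T * L)).
  { apply exp_le_exp; rewrite <- Rmult_assoc.
    apply Rmult_le_compat_r, Rmult_le_compat_l; [| apply pos_INR |]; lra. }
  assert (exp (INR N * (h * L)) * (INR N * B) <= exp (INR N * T * L) * (INR N * B))
    by (apply Rmult_le_compat_r; auto; apply Rmult_le_pos; [apply pos_INR | auto]).
  replace (INR N * h * L) with (INR N * (h * L)) by ring.
  lra.
Qed.

End SweepError.

Theorem corollary3 (f : R -> R) (L : R) (M : nat) (xi : nat -> R)
  (T : R) (y : R -> R) :
  (* f Lipschitz with constant L *)
  (forall u v, Rabs (f u - f v) <= L * Rabs (u - v)) ->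
  (* quadrature nodes 0 <= xi 1 < ... < xi M <= 1 *)
  (1 <= M)%nat -> 0 <= xi 1%nat -> xi M <= 1 ->
  (forall m, (1 <= m < M)%nat -> xi m < xi (S m)) ->
  (* y solves y' = f(y) on [0,T], and f o y in C^M([0,T]) *)
  0 < T ->
  (forall t, 0 <= t <= T ->
     filterlim y (within (fun x => 0 <= x <= T) (locally t)) (locally (y t))) ->
  (forall t, 0 < t < T -> is_derive y t (f (y t))) ->
  CM_on M (fun t => f (y t)) 0 T ->
  exists C1 C2 : R,
    forall (h eta0 : R) (gp vp : nat -> R),
      0 < h <= T ->
      (* previous iterate: starts at eta0 (or at its node value if 0 is a node) *)
      (gp O = eta0 \/ (xi 1%nat = 0 /\ gp O = vp 1%nat)) ->
      (* interior right endpoints are nodes: values coincide *)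
      (forall n, (1 <= n < num_sub M xi)%nat -> gp n = vp (node_of M xi n)) ->
      forall n, (1 <= n <= num_sub M xi)%nat ->
        Rabs (sdc_next f h M xi eta0 gp vp n - y (xiR M xi n * h))
        <= exp (INR (num_sub M xi) * h * L) * Rabs (eta0 - y 0)
           + C1 * h * node_err M xi h vp y + C2 * h ^ (S M).
Proof.
  intros f_lip M_pos xi1_nonneg xiM_le1 xi_incr T_pos y_cont y_deriv fy_CM.
  destruct (CM_taylor_bound M _ T T_pos fy_CM) as [K [c [K_nonneg fy_taylor]]].
  set (N := num_sub M xi); set (W := weight_bound M xi); set (A := exp (INR N * T * L)).
  exists (A * INR N * (L * (1 + W))), (A * INR N * (K * (1 + W))).
  intros h eta0 gp vp h_range gp_start gp_nodes n Hn.
  eapply Rle_trans.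
  - apply (sdc_error_bound f L M xi T y f_lip M_pos xi_incr
             (xi_in_unit M xi xi_incr xi1_nonneg xiM_le1) y_cont y_deriv K c K_nonneg fy_taylor
             h eta0 gp vp h_range gp_start gp_nodes); lia.
  - right; fold N W A; ring.
Qed.
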